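(* For all $y,y'\in\mathbb{R}^d$, $$\bigl|K(|y'|)y'-K(|y|)y\bigr|\le \sqrt{2(a^2+1)}\,a_0^{-1}\,|y'-y|.$$
   Context: Let $g(s)=a_0+a_1s^{\alpha_1}+\cdots+a_Ns^{\alpha_N}$ for $s\ge 0$, where $N\ge1$, $0<\alpha_1<\dots<\alpha_N$ are fixed numbers and $a_0,\dots,a_N\ge0$ with $a_0>0$, $a_N>0$. Define $K:[0,\infty)\to(0,\infty)$ by $K(\xi)=1/g(s(\xi))$, where $s=s(\xi)\ge0$ is the unique solution of $s\,g(s)=\xi$. Set $a=\alpha_N/(\alpha_N+1)\in(0,1)$. $|\cdot|$ is the Euclidean norm on $\mathbb{R}^d$. *)

From HB Require Import structures.
From mathcomp Require Import all_boot all_order all_algebra.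
From mathcomp Require Import all_classical all_reals all_analysis.
Set Implicit Arguments. Unset Strict Implicit. Unset Printing Implicit Defensive.
Import Order.TTheory GRing.Theory Num.Theory.
Local Open Scope ring_scope.
Local Open Scope classical_set_scope.

Definition gfun (R : realType) (N : nat) (acoef alpha : nat -> R) (s : R) : R :=
  acoef 0%N + \sum_(1 <= i < N.+1) acoef i * s `^ alpha i.

Definition sol (R : realType) (N : nat) (acoef alpha : nat -> R) (xi : R) : R :=
  xget 0 [set s | 0 <= s /\ s * gfun N acoef alpha s = xi].

Definition Kfun (R : realType) (N : nat) (acoef alpha : nat -> R) (xi : R) : R :=
  1 / gfun N acoef alpha (sol N acoef alpha xi).

Definition enorm (R : realType) (d : nat) (v : 'rV[R]_d) : R :=
  Num.sqrt (\sum_(i < d) v 0 i ^+ 2).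

(* K(r) = 1/g(s(r)) lies in (0, 1/a_0], and writing r = s g(s), the elementary
   inequality s (t^p - s^p) <= p (t - s) t^p (from Young's inequality) gives
   (K(r) - K(r')) r <= (a/a_0) (r' - r) for r <= r'.  For |y| <= |y'| write
   K(|y'|) y' - K(|y|) y = K(|y'|) (y' - y) + (K(|y'|) - K(|y|)) y; the triangle
   inequality and | |y'| - |y| | <= |y' - y| then give the Lipschitz constant
   (1 + a)/a_0, which is at most sqrt(2(a^2+1))/a_0. *)

From HB Require Import structures.
From mathcomp Require Import all_boot all_order all_algebra.
From mathcomp Require Import all_classical all_reals all_analysis.
From mathcomp Require Import ring lra.
Set Implicit Arguments. Unset Strict Implicit. Unset Printing Implicit Defensive.
Import Order.TTheory GRing.Theory Num.Theory.
Local Open Scope ring_scope.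
Local Open Scope classical_set_scope.
Import numFieldNormedType.Exports.

Section Powers.
Variable R : realType.
Implicit Types a b p q s t : R.

Lemma young_powR a b p : 0 <= a -> 0 <= b -> 0 < p ->
  (p + 1) * (a * b `^ p) <= a `^ (p + 1) + p * b `^ (p + 1).
Proof.
move=> a0 b0 p0; have p10 : 0 < p + 1 by lra.
have q0 : 0 < (p + 1) / p by rewrite divr_gt0.
have pq : (p + 1)^-1 + ((p + 1) / p)^-1 = 1 by rewrite invf_div; field; lra.
have e : p * ((p + 1) / p) = p + 1 by rewrite mulrC divfK ?gt_eqF.
have := conjugate_powR a0 (powR_ge0 b p) p10 q0 pq.
rewrite -powRrM e invf_div -(ler_pM2l p10).
suff -> : (p + 1) * (a `^ (p + 1) / (p + 1) + b `^ (p + 1) * (p / (p + 1)))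
    = a `^ (p + 1) + p * b `^ (p + 1) by [].
by field; lra.
Qed.

Lemma powR_increment_le s t p q : 0 <= s -> s <= t -> 0 < p -> p <= q ->
  s * (t `^ p - s `^ p) <= q * (t - s) * t `^ p.
Proof.
move=> s0 st p0 pq; have t0 : 0 <= t := le_trans s0 st.
have p10 : 0 < p + 1 by lra.
have := young_powR s0 t0 p0.
rewrite -(mulr_powRB1 s0 p10) -(mulr_powRB1 t0 p10) addrK => young.
apply: le_trans (_ : _ <= p * (t - s) * t `^ p) _; first by nra.
by rewrite ler_wpM2r ?powR_ge0 // ler_wpM2r // subr_ge0.
Qed.

Lemma powR_continuous p (x : R) : 0 < x -> {for x, continuous (fun s : R => s `^ p)}.
Proof.
move=> x0; apply/differentiable_continuous/derivable1_diffP.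
by apply: derivable_powR; rewrite in_itv /= x0.
Qed.
End Powers.

Section EuclideanNorm.
Variables (R : realType) (d : nat).
Implicit Types (u v : 'rV[R]_d) (c : R).

Definition edot u v : R := \sum_(i < d) u 0 i * v 0 i.

Lemma enorm_ge0 v : 0 <= enorm v.
Proof. exact: sqrtr_ge0. Qed.

Lemma edot_ge0 v : 0 <= edot v v.
Proof. by apply: sumr_ge0 => i _; rewrite -expr2 sqr_ge0. Qed.

Lemma sqr_enorm v : enorm v ^+ 2 = edot v v.
Proof.
rewrite /enorm (eq_bigr (fun i => v 0 i * v 0 i)) => [|i _]; last exact: expr2.
by rewrite sqr_sqrtr // edot_ge0.
Qed.

Lemma enorm_eq0 v : enorm v = 0 -> v = 0.
Proof.
move=> /(congr1 (fun x => x ^+ 2)); rewrite sqr_enorm expr0n /= => /eqP.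
rewrite psumr_eq0 => [/allP vv0|i _]; last by rewrite -expr2 sqr_ge0.
apply/rowP => i; rewrite mxE; apply/eqP.
by rewrite -[_ == 0]orbb -mulf_eq0; apply: (implyP (vv0 i _)); rewrite ?mem_index_enum.
Qed.

Lemma enormZ c v : enorm (c *: v) = `|c| * enorm v.
Proof.
rewrite /enorm -sqrtr_sqr -sqrtrM ?sqr_ge0 // mulr_sumr.
by congr Num.sqrt; apply: eq_bigr => i _; rewrite mxE exprMn.
Qed.

Lemma enormN v : enorm (- v) = enorm v.
Proof. by rewrite -scaleN1r enormZ normrN normr1 mul1r. Qed.

Lemma edot_le_AMGM u v t : 0 < t ->
  2 * edot u v <= t * edot u u + t^-1 * edot v v.
Proof.
move=> t0; rewrite /edot !mulr_sumr -big_split /=; apply: ler_sum => i _.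
rewrite -subr_ge0.
have -> : t * (u 0 i * u 0 i) + t^-1 * (v 0 i * v 0 i) - 2 * (u 0 i * v 0 i)
    = t^-1 * (t * u 0 i - v 0 i) ^+ 2 by field; rewrite gt_eqF.
by rewrite mulr_ge0 ?sqr_ge0 // invr_ge0 ltW.
Qed.

Lemma edot_le u v : edot u v <= enorm u * enorm v.
Proof.
have [/enorm_eq0 ->|u0] := eqVneq (enorm u) 0.
  by rewrite /edot big1 ?mulr_ge0 ?enorm_ge0 // => i _; rewrite mxE mul0r.
have [/enorm_eq0 ->|v0] := eqVneq (enorm v) 0.
  by rewrite /edot big1 ?mulr_ge0 ?enorm_ge0 // => i _; rewrite mxE mulr0.
have up : 0 < enorm u by rewrite lt_def u0 enorm_ge0.
have vp : 0 < enorm v by rewrite lt_def v0 enorm_ge0.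
have := edot_le_AMGM u v (divr_gt0 vp up).
rewrite -!sqr_enorm invf_div.
have -> : enorm v / enorm u * enorm u ^+ 2 + enorm u / enorm v * enorm v ^+ 2
    = 2 * (enorm u * enorm v) by field; rewrite !gt_eqF.
by rewrite ler_pM2l.
Qed.

Lemma enormD u v : enorm (u + v) <= enorm u + enorm v.
Proof.
rewrite -(ler_pXn2r (isT : (0 < 2)%N)) ?nnegrE ?addr_ge0 ?enorm_ge0 //.
have -> : enorm (u + v) ^+ 2 = enorm u ^+ 2 + 2 * edot u v + enorm v ^+ 2.
  rewrite !sqr_enorm /edot mulr_sumr -!big_split /=.
  by apply: eq_bigr => i _; rewrite !mxE; ring.
by rewrite sqrrD lerD2r lerD2l mulr2n; have := edot_le u v; lra.
Qed.

Lemma lerB_enorm u v : enorm u - enorm v <= enorm (u - v).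
Proof. by rewrite lerBlDr -{1}(subrK v u) enormD. Qed.

Lemma enorm_radial_lipschitz (K : R -> R) (M L : R) : 0 <= L ->
  (forall r, 0 <= r -> `|K r| <= M) ->
  (forall r r', 0 <= r -> r <= r' -> `|K r - K r'| * r <= L * (r' - r)) ->
  forall u v, enorm (K (enorm v) *: v - K (enorm u) *: u) <= (M + L) * enorm (v - u).
Proof.
move=> L0 KM KL.
suff le_uv u v : enorm u <= enorm v ->
    enorm (K (enorm v) *: v - K (enorm u) *: u) <= (M + L) * enorm (v - u).
  move=> u v; have [|/ltW vu] := leP (enorm u) (enorm v); first exact: le_uv.
  by rewrite -opprB enormN -[v - u]opprB enormN le_uv.
move=> uv.
have -> : K (enorm v) *: v - K (enorm u) *: u
    = K (enorm v) *: (v - u) + (K (enorm v) - K (enorm u)) *: u.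
  by rewrite scalerBr scalerBl addrA subrK.
apply: le_trans (enormD _ _) _; rewrite !enormZ mulrDl distrC lerD //.
  by rewrite ler_wpM2r ?enorm_ge0 ?KM ?enorm_ge0.
apply: le_trans (KL _ _ (enorm_ge0 u) uv) _.
by rewrite ler_wpM2l // lerB_enorm.
Qed.
End EuclideanNorm.

Section GeneralisedPolynomial.
Variables (R : realType) (N : nat) (acoef alpha : nat -> R).
Hypotheses (hN : (1 <= N)%N) (halpha1 : 0 < alpha 1%N)
  (halpha_inc : forall i : nat, (1 <= i)%N -> (i < N)%N -> alpha i < alpha i.+1)
  (hacoef : forall i : nat, (i <= N)%N -> 0 <= acoef i)
  (ha0 : 0 < acoef 0%N).
Implicit Types (i : nat) (r s t : R).

Local Notation g := (gfun N acoef alpha).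
Local Notation sol := (sol N acoef alpha).
Local Notation K := (Kfun N acoef alpha).

Lemma le_alpha : {in [pred i | 1 <= i <= N]%N &, {mono alpha : i j / (i <= j)%N >-> i <= j}}.
Proof.
apply: Order.NatMonotonyTheory.incn_inP => [i j /andP[i1 _] /andP[_ jN] k|i].
  by case/andP=> ik kj; rewrite inE (leq_trans i1 (ltnW ik)) (leq_trans (ltnW kj) jN).
by case/andP=> i1 _ /andP[_ iN]; apply: halpha_inc.
Qed.

Lemma alpha_gt0 i : (1 <= i <= N)%N -> 0 < alpha i.
Proof.
move=> iN; apply: lt_le_trans halpha1 _.
by rewrite le_alpha ?inE ?hN //; case/andP: iN.
Qed.

Lemma alpha_le_alphaN i : (1 <= i <= N)%N -> alpha i <= alpha N.
Proof. by move=> iN; rewrite le_alpha ?inE ?hN ?leqnn //; case/andP: iN. Qed.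

Lemma gfun_ge_coef0 s : 0 <= s -> acoef 0 <= g s.
Proof.
move=> s0; rewrite /gfun lerDl big_nat_cond sumr_ge0 // => i /andP[/andP[_ iN] _].
by rewrite mulr_ge0 ?powR_ge0 ?hacoef.
Qed.

Lemma gfun_gt0 s : 0 <= s -> 0 < g s.
Proof. by move=> s0; apply: lt_le_trans ha0 (gfun_ge_coef0 s0). Qed.

Lemma le_gfun s t : 0 <= s -> s <= t -> g s <= g t.
Proof.
move=> s0 st; rewrite /gfun lerD2l; apply: ler_sum_nat => i /andP[i1 iN].
have alpha_i0 : 0 <= alpha i by rewrite ltW // alpha_gt0 // i1.
by rewrite ler_wpM2l ?hacoef // (ge0_ler_powR alpha_i0) ?nnegrE ?(le_trans s0).
Qed.

Lemma gfun_increment_le s t : 0 <= s -> s <= t ->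
  s * (g t - g s) <= alpha N / (alpha N + 1) * (t * g t - s * g s).
Proof.
move=> s0 st; have aN : 0 < alpha N by rewrite alpha_gt0 // hN leqnn.
suff incr : s * (g t - g s) <= alpha N * (t - s) * g t.
  by rewrite mulrAC ler_pdivlMr; [nra | lra].
have coef0_term : 0 <= alpha N * (t - s) * acoef 0.
  by rewrite !mulr_ge0 ?subr_ge0 // ltW.
rewrite /gfun opprD addrACA subrr add0r -sumrB mulr_sumr mulrDr.
apply: ler_wpDl coef0_term _; rewrite mulr_sumr; apply: ler_sum_nat => i /andP[i1 iN].
rewrite -mulrBr [s * _]mulrCA [_ * (acoef i * _)]mulrCA ler_wpM2l ?hacoef //.
by apply: powR_increment_le; rewrite ?alpha_gt0 ?alpha_le_alphaN ?i1.
Qed.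

Lemma mulr_gfun_continuous x : 0 < x -> {for x, continuous (fun s => s * g s)}.
Proof.
move=> x0; apply: cvgM; first exact: cvg_id.
apply: cvgD; first exact: cvg_cst.
apply: cvg_big => [|i _]; first exact: add_continuous.
by apply: cvgM; [exact: cvg_cst | exact: powR_continuous].
Qed.

Lemma mulr_gfun_surjective r : 0 <= r -> exists2 s, 0 <= s & s * g s = r.
Proof.
move=> r0; have [->|rn0] := eqVneq r 0; first by exists 0; rewrite ?mul0r.
have rp : 0 < r by rewrite lt_def rn0.
pose lo := Num.min 1 (r / g 1); pose hi := r / acoef 0 + 1.
have lo0 : 0 < lo by rewrite lt_min ltr01 divr_gt0 ?gfun_gt0.
have lo1 : lo <= 1 by rewrite ge_min lexx.
have lo_hi : lo <= hi by rewrite (le_trans lo1) // lerDr divr_ge0 ?ltW.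
have lo_le : lo * g lo <= r.
  apply: le_trans (_ : r / g 1 * g 1 <= r); last by rewrite divfK ?gt_eqF ?gfun_gt0.
  apply: ler_pM; first exact: ltW.
  - exact/ltW/gfun_gt0/ltW.
  - by rewrite ge_min lexx orbT.
  - exact: le_gfun (ltW lo0) lo1.
have hi_ge : r <= hi * g hi.
  apply: le_trans (_ : hi * acoef 0 <= _).
    by rewrite mulrDl divfK ?gt_eqF // mul1r lerDl ltW.
  by rewrite ler_wpM2l ?gfun_ge_coef0 // (le_trans (ltW lo0)).
have cont : {within `[lo, hi], continuous (fun s => s * g s)}.
  apply: continuous_in_subspaceT => x; rewrite inE /= in_itv /= => /andP[lox _].
  exact/mulr_gfun_continuous/(lt_le_trans lo0).
case: (IVT (v := r) lo_hi cont) => [|s]; first by rewrite ge_min lo_le le_max hi_ge orbT.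
by rewrite in_itv /= => /andP[los _] <-; exists s; rewrite ?(le_trans (ltW lo0)).
Qed.

Lemma solP r : 0 <= r -> 0 <= sol r /\ sol r * g (sol r) = r.
Proof.
move=> r0; have [s s0 sr] := mulr_gfun_surjective r0.
have ex_s : exists s, 0 <= s /\ s * g s = r by exists s.
exact: (xgetPex 0 ex_s).
Qed.

Lemma le_sol r t : 0 <= r -> r <= t -> sol r <= sol t.
Proof.
move=> r0 rt; have [s0 sr] := solP r0; have [t0 tt] := solP (le_trans r0 rt).
rewrite leNgt; apply/negP => lt_ts.
have : sol t * g (sol t) < sol r * g (sol r).
  apply: le_lt_trans (_ : sol t * g (sol r) < _); last by rewrite ltr_pM2r ?gfun_gt0.
  by rewrite ler_wpM2l // le_gfun // ltW.
by rewrite sr tt ltNge rt.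
Qed.

Lemma normr_Kfun_le r : 0 <= r -> `|K r| <= (acoef 0)^-1.
Proof.
move=> r0; have [s0 _] := solP r0; have g0 := gfun_gt0 s0.
rewrite /Kfun div1r ger0_norm ?invr_ge0 ?(ltW g0) //.
by rewrite lef_pV2 ?posrE ?gfun_ge_coef0.
Qed.

Lemma Kfun_dist_le r t : 0 <= r -> r <= t ->
  `|K r - K t| * r <= alpha N / (alpha N + 1) / acoef 0 * (t - r).
Proof.
move=> r0 rt; move: (solP r0) (solP (le_trans r0 rt)) (le_sol r0 rt).
set s := sol r; set s' := sol t => -[s0 sr] [s'0 s't] le_s.
have g0 := gfun_gt0 s0; have g'0 := gfun_gt0 s'0; have le_g := le_gfun s0 le_s.
have -> : `|K r - K t| * r = s * (g s' - g s) / g s'.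
  rewrite /Kfun -/s -/s' -sr ger0_norm; last by rewrite subr_ge0 !div1r lef_pV2 ?posrE.
  by field; rewrite !gt_eqF.
have incr_ge0 : 0 <= s * (g s' - g s) by rewrite mulr_ge0 ?subr_ge0.
apply: le_trans (_ : s * (g s' - g s) / acoef 0 <= _).
  by rewrite ler_wpM2l // lef_pV2 ?posrE // (le_trans (gfun_ge_coef0 s0)).
rewrite [in X in _ <= X]mulrAC ler_pM2r ?invr_gt0 // -sr -s't.
exact: gfun_increment_le.
Qed.

End GeneralisedPolynomial.

Lemma addr1_le_sqrt (R : realType) (x : R) : x + 1 <= Num.sqrt (2 * (x ^+ 2 + 1)).
Proof.
have [x1|x1] := ltP (x + 1) 0; first by apply: le_trans (ltW x1) (sqrtr_ge0 _).
rewrite -[x + 1]ger0_norm // -sqrtr_sqr ler_sqrt; last by rewrite mulr_ge0 ?addr_ge0 ?sqr_ge0.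
by have := sqr_ge0 (x - 1); nra.
Qed.

Theorem proposition2p2 (R : realType) (N : nat) (acoef alpha : nat -> R) (d : nat)
  (hN : (1 <= N)%N)
  (halpha1 : 0 < alpha 1%N)
  (halpha_inc : forall i : nat, (1 <= i)%N -> (i < N)%N -> alpha i < alpha i.+1)
  (hacoef : forall i : nat, (i <= N)%N -> 0 <= acoef i)
  (ha0 : 0 < acoef 0%N) (haN : 0 < acoef N)
  (y y' : 'rV[R]_d) :
  let a := alpha N / (alpha N + 1) in
  enorm (Kfun N acoef alpha (enorm y') *: y' - Kfun N acoef alpha (enorm y) *: y)
    <= Num.sqrt (2 * (a ^+ 2 + 1)) * (acoef 0%N)^-1 * enorm (y' - y).
Proof.
cbv zeta; set a := alpha N / (alpha N + 1).
have alphaN0 : 0 < alpha N by apply: (alpha_gt0 hN halpha1 halpha_inc); rewrite hN /=.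
have a0 : 0 <= a by rewrite divr_ge0 ?ltW ?addr_gt0.
have := enorm_radial_lipschitz (divr_ge0 a0 (ltW ha0))
  (normr_Kfun_le hN halpha1 halpha_inc hacoef ha0)
  (Kfun_dist_le hN halpha1 halpha_inc hacoef ha0) y y'.
move/le_trans; apply; rewrite ler_wpM2r ?enorm_ge0 //.
have -> : (acoef 0)^-1 + a / acoef 0 = (a + 1) * (acoef 0)^-1 by rewrite mulrDl mul1r addrC.
by rewrite ler_wpM2r ?invr_ge0 ?(ltW ha0) ?addr1_le_sqrt.
Qed.
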